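(* Let $q$ be a prime power, $m\ge1$, $Q:=q^m$, and let $\mathcal{C}$ be an $[[n,\tilde{k},d]]_{q^m}$ rank-metric code defined from a linear code over $\mathbb{F}_Q$ with generator matrix $G\in\mathbb{F}_Q^{\tilde{k}\times n}$. Then $E\colon\mathbb{F}_Q^n\to\mathbb{F}_Q^{\tilde{k}}$, $E(x):=Gx^\top$, is an $(n-d+1,0)$-extractor for $\mathbb{F}_q$-restricted affine sources over $\mathbb{F}_Q$. Conversely, if a linear function $E\colon\mathbb{F}_Q^n\to\mathbb{F}_Q^{\tilde{k}}$ is an $(n-d+1,0)$-extractor for all $\mathbb{F}_q$-restricted affine sources over $\mathbb{F}_Q$, then its matrix is a generator matrix of an $[[n,\tilde{k},d]]_{q^m}$ code.
   Context: Fix an $\mathbb{F}_q$-linear isomorphism $\varphi\colon\mathbb{F}_Q\to\mathbb{F}_q^m$ (elements mapped to column vectors), and define $\Phi\colon\mathbb{F}_Q^n\to\mathbb{F}_q^{m\times n}$ by $\Phi(x_1,\dots,x_n)=[\varphi(x_1)|\cdots|\varphi(x_n)]$. An $[[n,\tilde{k},d]]_{q^m}$ code is a $\tilde{k}$-dimensional $\mathbb{F}_Q$-linear subspace $\mathcal{C}\subseteq\mathbb{F}_Q^n$ whose rank distance $d$ equals $\min\{\mathrm{rank}_{\mathbb{F}_q}\Phi(c): c\in\mathcal{C},c\neq0\}$. A $k$-dimensional affine source over $\mathbb{F}_Q^n$ is the uniform distribution on $\{xA+\beta: x\in\mathbb{F}_Q^k\}$ for some rank-$k$ matrix $A\in\mathbb{F}_Q^{k\times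 n}$ and $\beta\in\mathbb{F}_Q^n$; it is $\mathbb{F}_q$-restricted if $A$ can be chosen with entries in $\mathbb{F}_q$. A function $f\colon\mathbb{F}_Q^n\to\mathbb{F}_Q^{\tilde{k}}$ is a $(k,0)$-extractor for a class of affine sources if for every source in the class of dimension at least $k$, $f$ applied to it is exactly uniform on $\mathbb{F}_Q^{\tilde{k}}$. *)

From HB Require Import structures.
From mathcomp Require Import all_boot all_order all_algebra all_field.
Set Implicit Arguments. Unset Strict Implicit. Unset Printing Implicit Defensive.
Import GRing.Theory.
Local Open Scope ring_scope.

(* Setting: F = F_q a finite field, L = F_Q a finite-dimensional field extension
   of F (so Q = q^m with m = \dim_F L >= 1).  [finvect_type L] is L equipped with
   its canonical finite-type structure (it is the same field).  *)
Notation FQ L := (finvect_type L).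

Section Defs.
Variables (F : finFieldType) (L : fieldExtType F).

Definition Phi n (x : 'rV[FQ L]_n) : 'M[F]_(\dim {:FQ L}, n) :=
  \matrix_(i < \dim {:FQ L}, j < n) coord (vbasis {:FQ L}) i (x 0 j).

Definition rank_wt n (x : 'rV[FQ L]_n) : nat := \rank (Phi x).

Definition is_rank_code_gen kt n (G : 'M[FQ L]_(kt, n)) (d : nat) : Prop :=
  [/\ \rank G = kt,
      (exists u : 'rV[FQ L]_kt, u *m G != 0 /\ rank_wt (u *m G) = d) &
      (forall u : 'rV[FQ L]_kt, u *m G != 0 -> (d <= rank_wt (u *m G))%N)].

Definition affine_support k n (A : 'M[FQ L]_(k, n)) (beta : 'rV[FQ L]_n)
  : {set 'rV[FQ L]_n} := [set x *m A + beta | x : 'rV[FQ L]_k].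

Definition Fq_restricted k n (A : 'M[FQ L]_(k, n)) : Prop :=
  exists A0 : 'M[F]_(k, n), A = map_mx (in_alg (FQ L)) A0.

(* f applied to the uniform distribution on S is exactly uniform on F_Q^kt:
   for every y, Pr[f(X) = y] = #{v in S | f v = y} / #S = 1 / Q^kt. *)
Definition uniform_output n kt (f : 'rV[FQ L]_n -> 'rV[FQ L]_kt)
  (S : {set 'rV[FQ L]_n}) : Prop :=
  forall y : 'rV[FQ L]_kt,
    (#|[set v in S | f v == y]| * #|{: 'rV[FQ L]_kt}|)%N = #|S|.

Definition Fq_restricted_extractor n kt (f : 'rV[FQ L]_n -> 'rV[FQ L]_kt)
  (k : nat) : Prop :=
  forall (k' : nat) (A : 'M[FQ L]_(k', n)) (beta : 'rV[FQ L]_n),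
    (k <= k')%N -> \rank A = k' -> Fq_restricted A ->
    uniform_output f (affine_support A beta).

End Defs.

From HB Require Import structures.
From mathcomp Require Import all_boot all_order all_algebra all_field.
From mathcomp Require Import zify.
Set Implicit Arguments. Unset Strict Implicit. Unset Printing Implicit Defensive.
Import GRing.Theory.
Local Open Scope ring_scope.

(* A linear map x |-> x G^T is exactly uniform on the affine source
   { x A + beta } iff A G^T has full column rank, i.e. iff no nonzero u has
   u G A^T = 0.  When A = A0 has entries in F_q, a codeword c = u G satisfies
   c A0^T = 0 iff Phi(c) A0^T = 0, since Phi is F_q-linear and injective; so the
   rows of A0 span a subspace of the right kernel of Phi(c), whose dimension is
   n - rank_wt(c).  Hence every restricted source of dimension > n - d is
   annihilated by no nonzero codeword of a code of distance d, and conversely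
   the kernel of Phi(c) for a codeword c of weight < d is a restricted source
   of dimension >= n - d + 1 on which the map is not uniform. *)

Lemma row_full_mul_trP (R : fieldType) k kt n (X : 'M[R]_(k, n)) (G : 'M[R]_(kt, n)) :
  row_full (X *m G^T) <-> (forall u : 'rV_kt, u *m G *m X^T = 0 -> u = 0).
Proof.
rewrite /row_full -mxrank_tr trmx_mul trmxK -[_ == kt]/(row_free _).
split=> [free u | inj]; last by apply: inj_row_free => u; rewrite mulmxA; apply: inj.
by rewrite -mulmxA => /eqP; rewrite mulmx_free_eq0 // => /eqP.
Qed.

Section RestrictedSources.
Variables (F : finFieldType) (L : fieldExtType F).
Local Notation K := (FQ L).
Local Notation lift A0 := (map_mx (in_alg K) A0).

Lemma Phi_eq0 n (c : 'rV[K]_n) : (Phi c == 0) = (c == 0).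
Proof.
apply/eqP/eqP => [c0|->]; last by apply/matrixP => l j; rewrite !mxE linear0.
apply/rowP => j; rewrite mxE (coord_vbasis (memvf (c 0 j))).
apply: big1 => l _.
by have /matrixP/(_ l j) := c0; rewrite !mxE => ->; rewrite scale0r.
Qed.

Lemma Phi_mul_lift_tr n k (c : 'rV[K]_n) (A0 : 'M[F]_(k, n)) :
  Phi (c *m (lift A0)^T) = Phi c *m A0^T.
Proof.
apply/matrixP => l i; rewrite !mxE linear_sum; apply: eq_bigr => j _.
by rewrite !mxE mulr_algr linearZ /= mulrC.
Qed.

Lemma rank_lift_ortho_le n k (c : 'rV[K]_n) (A0 : 'M[F]_(k, n)) :
  c *m (lift A0)^T = 0 -> (\rank A0 + rank_wt c <= n)%N.
Proof.
move=> /eqP; rewrite -Phi_eq0 Phi_mul_lift_tr => /eqP cA0.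
have sA0 : (A0 <= kermx (Phi c)^T)%MS.
  by apply/sub_kermxP; rewrite -[A0]trmxK -trmx_mul cA0 trmx0.
have := mxrankS sA0; rewrite mxrank_ker mxrank_tr /rank_wt.
by have := rank_leq_col (Phi c); lia.
Qed.

Lemma exists_lift_ortho n (c : 'rV[K]_n) :
  exists k (A0 : 'M[F]_(k, n)),
    [/\ \rank A0 = k, (k + rank_wt c = n)%N & c *m (lift A0)^T = 0].
Proof.
pose B := kermx (Phi c)^T.
exists (\rank B), (row_base B); split; first by rewrite eq_row_base.
  by rewrite mxrank_ker mxrank_tr /rank_wt subnK // rank_leq_col.
apply/eqP; rewrite -Phi_eq0 Phi_mul_lift_tr -[_ *m _]trmxK trmx_mul trmxK.
have /sub_kermxP -> : (row_base B <= B)%MS by rewrite eq_row_base.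
by rewrite trmx0.
Qed.

Lemma eq_uniform_output n kt (f g : 'rV[K]_n -> 'rV[K]_kt) S :
  f =1 g -> uniform_output f S <-> uniform_output g S.
Proof.
by move=> fg; split=> U y; rewrite -(U y); congr (_ * _)%N;
  apply: eq_card => v; rewrite !inE fg.
Qed.

Lemma uniform_output_mulmxP n kt k (A : 'M[K]_(k, n)) beta (M : 'M[K]_(n, kt)) :
  uniform_output (fun x => x *m M) (affine_support A beta) <-> row_full (A *m M).
Proof.
set S := affine_support A beta.
pose fib (y : 'rV[K]_kt) := [set v in S | v *m M == y].
have S_beta : beta \in S by apply/imsetP; exists 0; rewrite ?mul0mx ?add0r.
split=> [U | fullAM].
  rewrite -sub1mx; apply/row_subP => i; apply/submxP.
  have : #|fib (row i 1%:M + beta *m M)| != 0%N.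
    apply: contraTneq S_beta => fib0; have := U (row i 1%:M + beta *m M).
    by rewrite fib0 mul0n => /esym/cards0_eq ->; rewrite inE.
  rewrite cards_eq0 => /set0Pn[_ /setIdP[/imsetP[x _ ->] /eqP xM]].
  by exists x; rewrite mulmxA; apply: (addIr (beta *m M)); rewrite -mulmxDl.
have card_fib y1 y2 : #|fib y1| = #|fib y2|.
  have /submxP[x0 x0AM] := submx_full (y2 - y1) fullAM.
  have -> : fib y2 = (fun v => v + x0 *m A) @: fib y1.
    apply/setP => v; apply/idP/imsetP.
      rewrite inE => /andP[/imsetP[x _ ->] /eqP xM].
      exists (x *m A + beta - x0 *m A); last by rewrite subrK.
      rewrite inE; apply/andP; split.
        by apply/imsetP; exists (x - x0); rewrite // mulmxBl addrAC.
      by rewrite !mulmxBl xM -mulmxA -x0AM opprB addrC subrK.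
    move=> [w]; rewrite inE => /andP[/imsetP[x _ ->] /eqP xM] ->.
    rewrite inE; apply/andP; split.
      by apply/imsetP; exists (x + x0); rewrite // mulmxDl addrAC.
    by rewrite mulmxDl xM -mulmxA -x0AM addrC subrK.
  by rewrite card_imset //; apply: addIr.
move=> y; have -> : #|S| = (\sum_(z : 'rV[K]_kt) #|fib z|)%N.
  rewrite -sum1_card (partition_big (fun v => v *m M) predT) //=.
  by apply: eq_bigr => z _; rewrite -sum1_card; apply: eq_bigl => v; rewrite inE.
rewrite (eq_bigr (fun _ => #|fib y|)) => [|z _]; last exact: card_fib.
by rewrite sum_nat_const mulnC.
Qed.

End RestrictedSources.

Theorem mainTheorem6 (F : finFieldType) (L : fieldExtType F) (n kt : nat) :
  (forall (G : 'M[FQ L]_(kt, n)) (d : nat),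
     is_rank_code_gen G d ->
     Fq_restricted_extractor (fun x : 'rV[FQ L]_n => x *m G^T) (n - d + 1)) /\
  (forall (E : {linear 'rV[FQ L]_n -> 'rV[FQ L]_kt}) (d : nat),
     (1 <= d <= n)%N ->
     Fq_restricted_extractor E (n - d + 1) ->
     let G := (lin1_mx E)^T in
     \rank G = kt /\
     (forall u : 'rV[FQ L]_kt, u *m G != 0 -> (d <= rank_wt (u *m G))%N)).
Proof.
split=> [G d [rG _ dist] k A beta kA + [A0 defA] | E d /andP[d1 dn] ext G].
  rewrite uniform_output_mulmxP row_full_mul_trP defA mxrank_map => rA0 u uGA0.
  apply/eqP/negPn/negP => u_neq0.
  have uG_neq0 : u *m G != 0 by rewrite mulmx_free_eq0 // /row_free rG.
  have := rank_lift_ortho_le uGA0; have := dist _ uG_neq0.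
  (* the two rank_wt terms differ in inferred ring instances; set unifies them *)
  by rewrite rA0; set w := rank_wt _; lia.
have ext_full k (A : 'M_(k, n)) :
    (n - d + 1 <= k)%N -> \rank A = k -> Fq_restricted A -> row_full (A *m G^T).
  move=> kA rA resA; rewrite trmxK -(uniform_output_mulmxP _ 0).
  by apply/(eq_uniform_output _ (mul_rV_lin1 E)); apply: ext.
have rG : \rank G = kt.
  have /eqP : row_full (1%:M *m G^T).
    by apply: ext_full; [lia | exact: mxrank1 | exists 1%:M; rewrite map_mx1].
  by rewrite mul1mx mxrank_tr.
split=> // u uG; rewrite leqNgt; apply/negP => low_wt.
have [k [A0 [rA0 kc cA0]]] := exists_lift_ortho (u *m G).
have /row_full_mul_trP/(_ u cA0) u0 : row_full (map_mx (in_alg (FQ L)) A0 *m G^T).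
  by apply: ext_full; rewrite ?mxrank_map //; [lia | exists A0].
by rewrite u0 mul0mx eqxx in uG.
Qed.
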